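(* Let $P$ be an $n\times n$ integer matrix which is anticommutative, i.e. $P^{T}\,\overline I\,P\cong\overline I$, where $\overline I=J-I$ and $J$ is the all-ones $n\times n$ matrix. Let $m$ be the number of columns of $P$ with odd entry sum and $k=n-m$ (equivalently, after a simultaneous permutation of rows and columns, $P^TP\cong\begin{bmatrix} I_m & J\\ J & \overline I_k\end{bmatrix}$). Then, unless $m$ is even and $k$ is odd, $P$ is dyadically invertible.
   Context: For integer matrices, $A\cong B$ means $A\equiv B\pmod 2$ entrywise. A square integer matrix $P$ is dyadically invertible if there is an integer matrix $A$ with $AP\cong I$. $J$ denotes a block of all ones of the appropriate size and $\overline I_k=J_{k\times k}-I_k$. *)

From mathcomp Require Import all_boot all_order all_algebra.
Set Implicit Arguments. Unset Strict Implicit. Unset Printing Implicit Defensive.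
Import GRing.Theory Num.Theory.
Local Open Scope ring_scope.

Definition cong2 (r c : nat) (A B : 'M[int]_(r, c)) : Prop :=
  forall i j, (A i j = B i j %[mod 2])%Z.

Definition Ibar (n : nat) : 'M[int]_n := const_mx 1 - 1%:M.

Definition anticommutative (n : nat) (P : 'M[int]_n) : Prop :=
  cong2 (P^T *m Ibar n *m P) (Ibar n).

Definition dyadically_invertible (n : nat) (P : 'M[int]_n) : Prop :=
  exists A : 'M[int]_n, cong2 (A *m P) 1%:M.

Definition odd_cols (n : nat) (P : 'M[int]_n) : nat :=
  #|[set j : 'I_n | ~~ (2 %| \sum_(i < n) P i j)%Z]|.

From mathcomp Require Import all_boot all_order all_algebra.
Set Implicit Arguments. Unset Strict Implicit. Unset Printing Implicit Defensive.
Import GRing.Theory.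
Local Open Scope ring_scope.

(* Reduce mod 2.  Let Q be the reduction of P, s its row of column sums and
   e the all-ones row, so J = e^T e and Q^T J Q = s^T s; anticommutativity
   then reads Q^T Q = s^T s + J + I over F_2.  A vector v in the left kernel
   of this Gram matrix is v = a e + b s with a = v.e and b = v.s; dotting with
   e and s, where e.e = n and e.s = s.s = m in F_2, gives a = a n + b m and
   b = (a + b) m.  For m odd this forces b = a = 0; for m even it forces
   b = 0 and a n = a, so a = 0 as soon as k, hence n, is even.  Thus Q is
   invertible over F_2, and any integer lift of its inverse is a dyadic
   inverse of P. *)

Lemma pchar_F2 : 2%N \in [pchar 'F_2]. Proof. exact: pchar_Fp. Qed.

Lemma F2_cases (x : 'F_2) : x = 0 \/ x = 1.
Proof. by case: x => [[|[|i]]] Hi //; [left|right]; apply/val_inj. Qed.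

Lemma F2_mulrr (x : 'F_2) : x * x = x.
Proof. by case: (F2_cases x) => ->; rewrite ?mulr0 ?mulr1. Qed.

Lemma natr_F2 (n : nat) : n%:R = (odd n)%:R :> 'F_2.
Proof.
by rewrite -[in LHS](odd_double_half n) natrD -mul2n natrM (pcharf0 pchar_F2) mul0r addr0.
Qed.

Lemma intr_F2_eq0 (a : int) : (a%:~R == 0 :> 'F_2) = (2 %| a)%Z.
Proof. by rewrite (dvdz_pcharf pchar_F2). Qed.

Lemma intr_F2_eq_mod (a b : int) : a%:~R = b%:~R :> 'F_2 <-> (a = b %[mod 2])%Z.
Proof.
split=> [E|/eqP]; last by rewrite eqz_mod_dvd -intr_F2_eq0 intrB subr_eq0 => /eqP.
by apply/eqP; rewrite eqz_mod_dvd -intr_F2_eq0 intrB E subrr.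
Qed.

Notation mod2 := (map_mx (intr : int -> 'F_2)).

Lemma cong2_mod2 (r c : nat) (A B : 'M[int]_(r, c)) : cong2 A B <-> mod2 A = mod2 B.
Proof.
split=> [AB | /matrixP AB i j]; last by apply/intr_F2_eq_mod; have := AB i j; rewrite !mxE.
by apply/matrixP => i j; rewrite !mxE; apply/intr_F2_eq_mod.
Qed.

Lemma mod2_Ibar (n : nat) : mod2 (Ibar n) = const_mx 1 - 1%:M.
Proof. by rewrite /Ibar map_mxB map_const_mx map_mx1 rmorph1. Qed.

Lemma unitmx_mod2_dyadically_invertible (n : nat) (P : 'M[int]_n) :
  mod2 P \in unitmx -> dyadically_invertible P.
Proof.
move=> unitP; exists (map_mx (fun x : 'F_2 => (x : nat)%:Z) (invmx (mod2 P))).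
apply/cong2_mod2; rewrite map_mxM -map_mx_comp map_mx1.
have -> : map_mx (intr \o (fun x : 'F_2 => (x : nat)%:Z)) (invmx (mod2 P)) = invmx (mod2 P).
  by apply/matrixP => i j; rewrite !mxE /=; apply: natr_Zp.
by rewrite mulVmx.
Qed.

Section ComRingMatrices.
Variables (R : comPzRingType) (n : nat).

Definition colsums (m : nat) (A : 'M[R]_(m, n)) : 'rV[R]_n := const_mx 1 *m A.

Lemma colsumsE (m : nat) (A : 'M[R]_(m, n)) j : colsums A 0 j = \sum_i A i j.
Proof. by rewrite mxE; apply: eq_bigr => i _; rewrite mxE mul1r. Qed.

Lemma const_mx1_rank1 : const_mx 1 = (const_mx 1 : 'rV[R]_n)^T *m const_mx 1 :> 'M_n.
Proof. by apply/matrixP => i j; rewrite !mxE big_ord1 !mxE mulr1. Qed.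

Lemma mulmx_rank1 (v w u : 'rV[R]_n) : v *m (w^T *m u) = (v *m w^T) 0 0 *: u.
Proof. by rewrite mulmxA {1}[v *m w^T]mx11_scalar mul_scalar_mx. Qed.

Lemma gram_anticommutative (Q : 'M[R]_n) :
  Q^T *m (const_mx 1 - 1%:M) *m Q = const_mx 1 - 1%:M ->
  Q^T *m Q = (colsums Q)^T *m colsums Q - (const_mx 1 - 1%:M).
Proof.
move=> anti; rewrite -[in RHS]anti mulmxBr mulmxBl mulmx1 opprB.
by rewrite const_mx1_rank1 trmx_mul !mulmxA addrC subrK.
Qed.

End ComRingMatrices.

Lemma F2_trivial_solution (a b mu nu : 'F_2) : mu = 1 \/ nu = 0 ->
  a = a * nu - b * mu -> b = a * mu - b * mu -> a = 0 /\ b = 0.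
Proof.
by case: (F2_cases a) => ->; case: (F2_cases b) => ->;
  case: (F2_cases mu) => ->; case: (F2_cases nu) => -> [].
Qed.

Lemma unitmx_F2_gram (n : nat) (u : 'rV['F_2]_n) :
  \sum_j u 0 j = 1 \/ n%:R = 0 :> 'F_2 ->
  u^T *m u - (const_mx 1 - 1%:M) \in unitmx.
Proof.
set mu := \sum_j u 0 j => hyp; rewrite -row_free_unit; apply: inj_row_free => v.
rewrite const_mx1_rank1; set e : 'rV_n := const_mx 1.
rewrite mulmxBr mulmxBr mulmx1 !mulmx_rank1.
set a := (v *m e^T) 0 0; set b := (v *m u^T) 0 0 => /eqP.
rewrite subr_eq0 eq_sym subr_eq addrC -subr_eq eq_sym => /eqP Ev.
have dot_e : (e *m e^T) 0 0 = n%:R /\ (u *m e^T) 0 0 = mu.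
  split; rewrite mxE; last by apply: eq_bigr => j _; rewrite !mxE mulr1.
  by rewrite (eq_bigr (fun _ => 1)) ?sumr_const ?card_ord // => j _; rewrite !mxE mulr1.
have dot_u : (e *m u^T) 0 0 = mu /\ (u *m u^T) 0 0 = mu.
  by rewrite !mxE; split; apply: eq_bigr => j _; rewrite !mxE ?mul1r ?F2_mulrr.
have entry00 (x y : 'F_2) (M N : 'M_1) : (x *: M - y *: N) 0 0 = x * M 0 0 - y * N 0 0.
  by rewrite !mxE.
have Ea : a = a * n%:R - b * mu.
  by rewrite {1}/a {1}Ev mulmxBl -!scalemxAl entry00; case: dot_e => -> ->.
have Eb : b = a * mu - b * mu.
  by rewrite {1}/b {1}Ev mulmxBl -!scalemxAl entry00; case: dot_u => -> ->.
have [a0 b0] := F2_trivial_solution hyp Ea Eb.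
by rewrite Ev a0 b0 !scale0r subr0.
Qed.

Lemma odd_cols_le (n : nat) (P : 'M[int]_n) : (odd_cols P <= n)%N.
Proof. by rewrite /odd_cols (leq_trans (max_card _)) ?card_ord. Qed.

Lemma colsums_mod2 (m n : nat) (A : 'M[int]_(m, n)) : colsums (mod2 A) = mod2 (colsums A).
Proof. by rewrite /colsums map_mxM map_const_mx rmorph1. Qed.

Lemma sum_colsums_mod2 (n : nat) (P : 'M[int]_n) :
  \sum_j colsums (mod2 P) 0 j = (odd_cols P)%:R.
Proof.
rewrite /odd_cols -sum1_card natr_sum [RHS]big_mkcond; apply: eq_bigr => j _.
rewrite colsums_mod2 mxE inE -colsumsE -intr_F2_eq0.
by case: (F2_cases (colsums P 0 j)%:~R) => ->; rewrite ?eqxx ?oner_eq0.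
Qed.

Theorem proposition3p6 (n : nat) (P : 'M[int]_n) :
  anticommutative P ->
  let m := odd_cols P in
  let k := (n - m)%N in
  ~~ (~~ odd m && odd k) ->
  dyadically_invertible P.
Proof.
move=> anti m k parity; apply: unitmx_mod2_dyadically_invertible.
have anti2 : (mod2 P)^T *m (const_mx 1 - 1%:M) *m mod2 P = const_mx 1 - 1%:M.
  by rewrite map_trmx -mod2_Ibar -!map_mxM; apply/cong2_mod2.
have unit_gram : (mod2 P)^T *m mod2 P \in unitmx.
  rewrite (gram_anticommutative anti2); apply: unitmx_F2_gram.
  rewrite sum_colsums_mod2 -/m (natr_F2 m) (natr_F2 n).
  by move: parity; rewrite /k oddB ?odd_cols_le //; case: (odd m); case: (odd n); auto.
by move: unit_gram; rewrite unitmx_mul unitmx_tr => /andP[].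
Qed.
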